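(* Let $H$ be a connected finite simple graph on $n$ vertices, where $n \in \{5,6\}$. If $\Delta(\overline{H}) > 1$, then $H$ is a weak König–Egerváry graph.
   Context: $\overline{H}$ denotes the complement of $H$. A graph $H$ is a weak König–Egerváry graph if $H$ has a matching $M$ and a vertex set $Q \subseteq V(H)$ with $|Q| \leq |M|$ such that $Q$ is a vertex cover of $H - M$. *)

(* A finite simple graph is a symmetric irreflexive
   relation e on a finType T (the vertex set). Edges are represented as
   2-element vertex sets [set x; y] with e x y. *)
From mathcomp Require Import all_boot.
Set Implicit Arguments. Unset Strict Implicit. Unset Printing Implicit Defensive.

Section Graphs.
Variable T : finType.

Definition simple_graph (e : rel T) : Prop := symmetric e /\ irreflexive e.

Definition connected_graph (e : rel T) : Prop := forall x y : T, connect e x y.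

Definition compl_rel (e : rel T) : rel T := fun x y => (x != y) && ~~ e x y.

Definition degree (e : rel T) (v : T) : nat := #|[set u | e v u]|.
Definition max_degree (e : rel T) : nat := \max_(v : T) degree e v.

Definition is_edge (e : rel T) (f : {set T}) : bool :=
  [exists x, exists y, e x y && (f == [set x; y])].

Definition matching (e : rel T) (M : {set {set T}}) : Prop :=
  (forall f, f \in M -> is_edge e f) /\
  (forall f g, f \in M -> g \in M -> f != g -> [disjoint f & g]).

Definition del_edges (e : rel T) (M : {set {set T}}) : rel T :=
  fun x y => e x y && ([set x; y] \notin M).

Definition vertex_cover (e : rel T) (Q : {set T}) : Prop :=
  forall x y, e x y -> (x \in Q) || (y \in Q).

Definition weak_KE (e : rel T) : Prop :=
  exists M : {set {set T}}, exists Q : {set T},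
    [/\ matching e M, #|Q| <= #|M| & vertex_cover (del_edges e M) Q].

End Graphs.

(* There are only 2^10 resp. 2^15 graphs on the vertex set {0, ..., n-1} for
   n = 5, 6, so the theorem is decided by computation.  For every labelled graph
   with a vertex having two non-neighbours we either exhibit a matching M with a
   set Q of at most |M| vertices covering H - M, or a vertex set with no edge
   leaving it, which shows that the graph is disconnected.  Relabelling the
   vertices of an arbitrary finite graph by 0, ..., n-1 transfers the result. *)
From mathcomp Require Import all_boot.
Set Implicit Arguments. Unset Strict Implicit. Unset Printing Implicit Defensive.

Fixpoint subseqs (T : Type) (s : seq T) : seq (seq T) :=
  if s is x :: s' then let r := subseqs s' in r ++ map (cons x) r else [:: [::]].

Lemma mem_subseqs_filter (T : eqType) (a : pred T) (s : seq T) : filter a s \in subseqs s.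
Proof.
elim: s => [|x s IHs] //=; rewrite mem_cat.
by case: (a x); rewrite ?(map_f (cons x)) ?IHs ?orbT.
Qed.

(* [has] evaluates its whole list under the call-by-value [vm_compute], since
   [||] is an ordinary function; this variant stops at the first witness. *)
Fixpoint has_lazy (T : Type) (a : pred T) (s : seq T) : bool :=
  if s is x :: s' then (if a x then true else has_lazy a s') else false.

Lemma has_lazyE (T : Type) (a : pred T) (s : seq T) : has_lazy a s = has a s.
Proof. by elim: s => //= x s ->; case: (a x). Qed.

Section Certificates.
Variables (T : eqType) (g : rel T) (vs : seq T).

Definition endpoints (Ms : seq (T * T)) : seq T := flatten [seq [:: p.1; p.2] | p <- Ms].

Lemma uniq_endpoints_uniq (Ms : seq (T * T)) : uniq (endpoints Ms) -> uniq Ms.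
Proof.
elim: Ms => //= p Ms IHMs /and3P [_ p2_Ms /IHMs ->]; rewrite andbT.
by apply: contra p2_Ms => pMs; apply/flatten_mapP; exists p; rewrite ?inE ?eqxx ?orbT.
Qed.

Lemma uniq_endpoints_eq (Ms : seq (T * T)) (p q : T * T) (u : T) :
  uniq (endpoints Ms) -> p \in Ms -> q \in Ms ->
  u \in [:: p.1; p.2] -> u \in [:: q.1; q.2] -> p = q.
Proof.
have in_endpoints r Ns : r \in Ns -> u \in [:: r.1; r.2] -> u \in endpoints Ns.
  by move=> rNs ur; apply/flatten_mapP; exists r.
elim: Ms => // r Ms IHMs; rewrite (cat_uniq [:: r.1; r.2]) -/(endpoints Ms).
case/and3P=> _ r_Ms uMs /[1!in_cons] /predU1P [-> | pMs] /[1!in_cons] /predU1P [-> | qMs] up uq //.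
- by case/hasP: r_Ms; exists u; rewrite ?(in_endpoints q).
- by case/hasP: r_Ms; exists u; rewrite ?(in_endpoints p).
- exact: IHMs.
Qed.

Definition uncovered (Ms : seq (T * T)) (Q : seq T) (x y : T) : bool :=
  [&& g x y, x \notin Q, y \notin Q, (x, y) \notin Ms & (y, x) \notin Ms].

Definition weak_KE_cert (Ms : seq (T * T)) (Q : seq T) : bool :=
  [&& size Q <= size Ms, all (fun p => g p.1 p.2) Ms, all (mem vs) (endpoints Ms),
      uniq (endpoints Ms) & ~~ has_lazy (fun x => has_lazy (uncovered Ms Q x) vs) vs].

Definition cut_crossed (S : seq T) : bool :=
  [|| all (predC (mem S)) vs, all (mem S) vs |
      has (fun x => has (fun y => ((x \in S) != (y \in S)) && g x y) vs) vs].

Definition grow (S : seq T) : seq T :=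
  [seq y <- vs | (y \in S) || has (fun x => (x \in S) && g x y) vs].

Definition has_two_nonneighbours : bool :=
  has (fun v => 1 < count (fun u => (v != u) && ~~ g v u) vs) vs.

End Certificates.

Section Labelling.
Variables (T : finType) (U : eqType) (e : rel T) (g : rel U) (f : T -> U) (h : U -> T).
Variable vs : seq U.
Hypotheses (fK : cancel f h) (hK : {in vs, cancel h f}).
Hypotheses (f_vs : forall x, f x \in vs) (vs_uniq : uniq vs).
Hypothesis g_f : forall x y, g (f x) (f y) = e x y.

Lemma count_vertices (P : pred U) : count P vs = #|[pred x | P (f x)]|.
Proof.
have vs_perm : perm_eq vs (map f (enum T)).
  apply: uniq_perm => //; first by rewrite (map_inj_uniq (can_inj fK)) enum_uniq.
  move=> u; apply/idP/mapP => [u_vs | [x _ ->] //]; by exists (h u); rewrite ?mem_enum ?hK.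
by rewrite (permP vs_perm) count_map enumT cardE /enum_mem size_filter.
Qed.

Lemma has_two_nonneighbours_max_degree :
  1 < max_degree (compl_rel e) -> has_two_nonneighbours g vs.
Proof.
move=> max_gt1; apply/hasP.
have [v v_gt1] : exists v, 1 < degree (compl_rel e) v.
  apply/existsP; move: max_gt1; apply: contraLR => /existsPn v_le1.
  by rewrite -leqNgt; apply/bigmax_leqP => v _; rewrite leqNgt v_le1.
exists (f v) => //; rewrite count_vertices; apply: leq_trans v_gt1 (eq_leq _).
by apply: eq_card => u; rewrite !inE /compl_rel (inj_eq (can_inj fK)) g_f.
Qed.

Lemma cut_crossed_connected S : connected_graph e -> cut_crossed g vs S.
Proof.
move=> conn; apply/norP => -[/allPn [a a_vs aS] /norP [/allPn [b b_vs bS] /hasPn no_cut]].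
have S_closed : closed e [pred x | f x \in S].
  move=> x y exy /=; apply/eqP.
  by move/hasPn: (no_cut _ (f_vs x)) => /(_ _ (f_vs y)); rewrite g_f exy andbT negbK.
have := closed_connect S_closed (conn (h a) (h b)).
have {aS bS} [aS bS] : a \in S /\ b \notin S by split; [exact/negPn | exact: bS].
by rewrite !inE !hK // aS (negPf bS).
Qed.

Lemma weak_KE_of_cert Ms Q : weak_KE_cert g vs Ms Q -> weak_KE e.
Proof.
case/and5P=> Q_le Ms_edges Ms_vs Ms_uniq; rewrite has_lazyE => /hasPn covered.
have p_vs p : p \in Ms -> (p.1 \in vs) && (p.2 \in vs).
  move=> pMs; apply/andP; split; apply: (allP Ms_vs); apply/flatten_mapP;
    by exists p; rewrite // !inE eqxx ?orbT.
pose edge_of p := [set h p.1; h p.2].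
have mem_edge_of p u : p \in Ms -> u \in vs -> (h u \in edge_of p) = (u \in [:: p.1; p.2]).
  by case/p_vs/andP => p1 p2 u_vs; rewrite !inE !(inj_in_eq (can_in_inj hK)).
have edge_ofK p q u : p \in Ms -> q \in Ms -> u \in vs ->
    h u \in edge_of p -> h u \in edge_of q -> p = q.
  move=> pMs qMs u_vs; rewrite !mem_edge_of //; exact: uniq_endpoints_eq Ms_uniq pMs qMs.
have M_card : #|[set A in map edge_of Ms]| = size Ms.
  rewrite cardsE -(size_map edge_of); apply/card_uniqP.
  rewrite map_inj_in_uniq; first exact: uniq_endpoints_uniq.
  move=> p q pMs qMs pq.
  have /andP [p1 _] := p_vs p pMs.
  by apply: (edge_ofK _ _ p.1) => //; rewrite -?pq /edge_of !inE eqxx.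
exists [set A in map edge_of Ms], [set x in map h Q]; split.
- split=> [A | A B]; rewrite !inE.
  + case/mapP=> p pMs ->; have /andP [p1 p2] := p_vs p pMs.
    apply/existsP; exists (h p.1); apply/existsP; exists (h p.2).
    by rewrite eqxx andbT -g_f !hK //; exact: (allP Ms_edges).
  + case/mapP=> p pMs -> /mapP [q qMs ->] pq; apply/pred0P => x /=.
    apply/negbTE/andP; rewrite -(fK x) => -[xp xq].
    by move: pq; rewrite (edge_ofK p q (f x)) ?eqxx.
- rewrite M_card cardsE; apply: leq_trans (card_size _) _; by rewrite size_map.
- move=> x y /andP [exy xyM]; have := covered _ (f_vs x); rewrite has_lazyE.
  move/hasPn/(_ _ (f_vs y)); rewrite /uncovered g_f exy /= !negb_and !negbK !inE.
  case/or4P=> [xQ | yQ | xyMs | yxMs].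
  + by rewrite -(fK x) map_f.
  + by rewrite -(fK y) map_f ?orbT.
  + by move: xyM; rewrite inE -{1}(fK x) -{1}(fK y) (map_f edge_of xyMs).
  + by move: xyM; rewrite inE setUC -{1}(fK x) -{1}(fK y) (map_f edge_of yxMs).
Qed.

End Labelling.

Definition edge_pairs (n : nat) : seq (nat * nat) :=
  [seq p <- [seq (i, j) | i <- iota 0 n, j <- iota 0 n] | p.1 < p.2].

Definition graph_of (n : nat) (E : seq (nat * nat)) : rel nat :=
  let adj := [seq [seq ((x, y) \in E) || ((y, x) \in E) | y <- iota 0 n] | x <- iota 0 n] in
  fun x y => nth false (nth [::] adj x) y.

Lemma graph_of_edge_pairs n (r : rel nat) x y : x < n -> y < n ->
  graph_of n [seq p <- edge_pairs n | r p.1 p.2] x y = ((x < y) && r x y) || ((y < x) && r y x).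
Proof.
move=> xn yn; have pair_in i j : i < n -> j < n -> (i, j) \in [seq (i, j) | i <- iota 0 n, j <- iota 0 n].
  by move=> i_n j_n; apply: (allpairs_f pair); rewrite mem_iota.
rewrite /graph_of (nth_map 0) ?size_iota // (nth_map 0) ?size_iota // !nth_iota //=.
by rewrite !mem_filter /= !pair_in // !andbT ![r _ _ && _]andbC.
Qed.

Fixpoint matchings (E : seq (nat * nat)) : seq (seq (nat * nat)) :=
  if E is p :: E' then
    let r := matchings E' in
    [seq p :: m | m <- r & (p.1 \notin endpoints m) && (p.2 \notin endpoints m)] ++ r
  else [:: [::]].

(* A cover of [H - M] can be padded, so only sets [Q] of exactly [|M|] vertices
   are tried; connectivity is tested only when no certificate is found, on the
   component of [0] computed by [grow]. *)
Definition weak_KE_checked (n : nat) : bool :=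
  let vs := iota 0 n in
  let Qss := [seq [seq Q <- subseqs vs | size Q == k] | k <- iota 0 n] in
  all (fun E => let g := graph_of n E in
     if has_two_nonneighbours g vs then
       if has_lazy (fun Ms => has_lazy (weak_KE_cert g vs Ms) (nth [::] Qss (size Ms))) (matchings E)
       then true
       else ~~ cut_crossed g vs (iter n.-1 (grow g vs) [:: 0])
     else true)
    (subseqs (edge_pairs n)).

Lemma weak_KE_of_checked (T : finType) (e : rel T) :
  weak_KE_checked #|T| -> simple_graph e -> connected_graph e ->
  1 < max_degree (compl_rel e) -> weak_KE e.
Proof.
move=> checked [e_sym e_irr] conn max_gt1.
case: (pickP (fun _ : T => true)) => [x0 _ | T0]; last by move: max_gt1; rewrite /max_degree big_pred0.
pose f x := index x (enum T); pose h i := nth x0 (enum T) i.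
pose n := #|T|; pose vs := iota 0 n.
have fK : cancel f h by move=> x; rewrite /h /f nth_index ?mem_enum.
have hK : {in vs, cancel h f}.
  by move=> i; rewrite mem_iota /f /h /n cardE => /= i_n; rewrite index_uniq ?enum_uniq.
have f_vs x : f x \in vs by rewrite mem_iota /= /f /n cardE index_mem mem_enum.
pose g := graph_of n [seq p <- edge_pairs n | e (h p.1) (h p.2)].
have g_f x y : g (f x) (f y) = e x y.
  have f_lt z : f z < n by move: (f_vs z); rewrite mem_iota.
  rewrite /g (graph_of_edge_pairs (fun i j => e (h i) (h j))) ?f_lt //= !fK (e_sym y x).
  by case: ltngtP => [_ | _ | /(can_inj fK) ->]; rewrite /= ?orbF ?e_irr.
move/allP: checked => /(_ _ (mem_subseqs_filter (fun p => e (h p.1) (h p.2)) _)) /=.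
have vs_uniq : uniq vs := iota_uniq 0 n.
rewrite -/g (has_two_nonneighbours_max_degree fK hK f_vs vs_uniq g_f max_gt1).
rewrite (cut_crossed_connected hK f_vs g_f _ conn) has_lazyE.
case: hasP => // -[Ms _]; rewrite has_lazyE => /hasP [Q _ cert] _.
exact: weak_KE_of_cert fK hK f_vs g_f _ _ cert.
Qed.

Lemma weak_KE_checked5 : weak_KE_checked 5.
Proof. vm_cast_no_check (erefl true). Qed.

Lemma weak_KE_checked6 : weak_KE_checked 6.
Proof. vm_cast_no_check (erefl true). Qed.

Theorem proposition4p13 (T : finType) (e : rel T) :
  simple_graph e -> connected_graph e ->
  (#|T| = 5 \/ #|T| = 6) ->
  1 < max_degree (compl_rel e) ->
  weak_KE e.
Proof.
move=> simple conn card_T; apply: weak_KE_of_checked simple conn.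
by case: card_T => ->; [exact: weak_KE_checked5 | exact: weak_KE_checked6].
Qed.
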